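(* Let $\{K_i\}_{i\in I}$ be a family of fields, let $V_i$ be a vector space over $K_i$ for each $i\in I$, and let $R=\prod_{i\in I}\mathrm{End}_{K_i}(V_i)$. Then for every $a\in R$ there exists an idempotent $e\in aRa$ such that $(a(1-e))^2=0$.
   Context: Elements of $\mathrm{End}_{K_i}(V_i)$ act on the left of $V_i$; $R$ is the direct product ring with coordinatewise operations. *)

From HB Require Import structures.
From mathcomp Require Import all_boot all_order all_algebra.
Set Implicit Arguments. Unset Strict Implicit. Unset Printing Implicit Defensive.
Import GRing.Theory.
Local Open Scope ring_scope.

(* An element of R is a family
   x = (x_i)_i of K_i-linear maps x_i : V_i -> V_i; we represent it by the
   underlying family of functions together with the predicate [inR x]
   stating that every component is K_i-linear. *)

Definition famEnd (I : Type) (K : I -> fieldType) (V : forall i, lmodType (K i)) :=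
  forall i : I, V i -> V i.

Definition inR (I : Type) (K : I -> fieldType) (V : forall i, lmodType (K i))
  (x : famEnd V) : Prop := forall i, linear (x i).

Definition mulR (I : Type) (K : I -> fieldType) (V : forall i, lmodType (K i))
  (x y : famEnd V) : famEnd V := fun i => x i \o y i.

Definition oneR (I : Type) (K : I -> fieldType) (V : forall i, lmodType (K i))
  : famEnd V := fun i => id.

Definition zeroR (I : Type) (K : I -> fieldType) (V : forall i, lmodType (K i))
  : famEnd V := fun i _ => 0.

Definition subR (I : Type) (K : I -> fieldType) (V : forall i, lmodType (K i))
  (x y : famEnd V) : famEnd V := fun i v => x i v - y i v.

Arguments oneR {I K} V.
Arguments zeroR {I K} V.

(** The theorem is coordinatewise, so it suffices to treat one vector space
    [V] and one endomorphism [a].  Let [N := ker a ∩ im a] and choose a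
    complement [T] of [N] inside [im a]; then [T ∩ ker a = 0], so there is a
    projection [e] onto [T] along a supplement of [ker a].  Since [e] kills
    [ker a] and has image in [im a], it factors as [e = a r a] through an
    inner inverse [h] of [a] ([a h a = a]), namely [r = h e h].  For [y] in
    [im a] the vector [y - e y] lies in [N ⊆ ker a], hence [a (1 - e) a = 0],
    which gives [(a (1 - e))^2 = 0].  All complements exist by Zorn's lemma. *)

From HB Require Import structures.
From mathcomp Require Import all_boot all_order all_algebra.
From mathcomp Require Import boolp classical_sets.
Set Implicit Arguments. Unset Strict Implicit. Unset Printing Implicit Defensive.
Import GRing.Theory.
Local Open Scope ring_scope.
Local Open Scope classical_set_scope.

Section Subspaces.
Variables (K : fieldType) (V : lmodType K).
Implicit Types (S W Z A B : set V).

Definition subspace (S : set V) := S 0 /\ forall k x y, S x -> S y -> S (k *: x + y).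

Lemma subspaceD S : subspace S -> forall x y, S x -> S y -> S (x + y).
Proof. by case=> _ Slin x y Sx Sy; have := Slin 1 x y Sx Sy; rewrite scale1r. Qed.

Lemma subspaceZ S : subspace S -> forall k x, S x -> S (k *: x).
Proof. by case=> S0 Slin k x Sx; have := Slin k x 0 Sx S0; rewrite addr0. Qed.

Lemma subspaceB S : subspace S -> forall x y, S x -> S y -> S (x - y).
Proof.
by move=> sS x y Sx Sy; apply: subspaceD => //; rewrite -scaleN1r; apply: subspaceZ.
Qed.

Lemma subspace0 : subspace [set 0 : V].
Proof. by split=> // k x y -> ->; rewrite scaler0 addr0. Qed.

Lemma subspaceI S1 S2 : subspace S1 -> subspace S2 -> subspace (S1 `&` S2).
Proof.
move=> [S1_0 S1lin] [S2_0 S2lin]; split=> // k x y [? ?] [? ?].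
by split; [exact: S1lin | exact: S2lin].
Qed.

Lemma subspace_kernel (f : {linear V -> V}) : subspace [set x | f x = 0].
Proof. by split=> [|k x y fx fy] /=; rewrite ?linear0 // linearP fx fy scaler0 addr0. Qed.

Lemma subspace_range (f : {linear V -> V}) : subspace (range f).
Proof.
split; first by exists 0; rewrite ?linear0.
by move=> k _ _ [x _ <-] [y _ <-]; exists (k *: x + y) => //; exact: linearP.
Qed.

Lemma maximal_disjoint_subspace W Z : subspace Z -> W `&` Z `<=` [set 0] ->
  exists A, [/\ subspace A, Z `<=` A, W `&` A `<=` [set 0] &
    forall B, A `<` B -> subspace B -> ~ W `&` B `<=` [set 0]].
Proof.
move=> sZ WZ.
(* The empty set is admitted so that the union of the empty chain qualifies. *)
pose P A := [/\ forall k x y, A x -> A y -> A (k *: x + y),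
  W `&` A `<=` [set 0] & A !=set0 -> Z `<=` A].
have [A [[Alin WA AZ] Amax]] : exists A, P A /\ forall B, A `<` B -> ~ P B.
  apply: Zorn_bigcup => F FP Ftot; split.
  - move=> k x y [X FX Xx] [Y FY Yy].
    have [XY|YX] := Ftot X Y FX FY.
    + by exists Y => //; have [Ylin _ _] := FP Y FY; apply: Ylin => //; exact: XY.
    + by exists X => //; have [Xlin _ _] := FP X FX; apply: Xlin => //; exact: YX.
  - by move=> x [Wx [X FX Xx]]; have [_ WX _] := FP X FX; exact: WX.
  - move=> [x [X FX Xx]] z Zz; have [_ _ XZ] := FP X FX.
    by exists X => //; apply: XZ => //; exists x.
have ZA : Z `<=` A.
  apply: AZ; apply: contrapT => A0; apply: (Amax Z).
    split=> [x Ax|ZA]; first by case: A0; exists x.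
    by apply: A0; exists 0; apply: ZA; exact: sZ.1.
  by split=> [||_ //]; [exact: sZ.2 | exact: WZ].
exists A; split=> // [|B AB sB WB]; first by split; [exact: ZA sZ.1 | exact: Alin].
apply: (Amax B AB); split=> // [|_]; first exact: sB.2.
by apply: subset_trans ZA (properW AB).
Qed.

Lemma maximal_disjoint_supplement W A : subspace W -> subspace A ->
  W `&` A `<=` [set 0] ->
  (forall B, A `<` B -> subspace B -> ~ W `&` B `<=` [set 0]) ->
  forall v, exists2 w, W w & A (v - w).
Proof.
move=> sW sA WA Amax v; apply: contrapT => notWA.
pose B u := exists q k, A q /\ u = q + k *: v.
apply: (Amax B); [split | split | ].
- by move=> u Au; exists u, 0; rewrite scale0r addr0.
- move=> BA; apply: notWA; exists 0; first exact: sW.1.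
  rewrite subr0; apply: BA; exists 0, 1.
  by rewrite add0r scale1r; split; first exact: sA.1.
- by exists 0, 0; rewrite scale0r addr0; split; first exact: sA.1.
- move=> k _ _ [q1 [k1 [Aq1 ->]]] [q2 [k2 [Aq2 ->]]].
  exists (k *: q1 + q2), (k * k1 + k2); split; first exact: sA.2.
  by rewrite scalerDr scalerA addrACA -scalerDl.
- move=> u [Wu [q [k [Aq equ]]]]; subst u.
  have [k0|kN0] := eqVneq k 0.
    by move: Wu; rewrite k0 scale0r addr0 => Wq; exact: WA.
  case: notWA; exists (k^-1 *: (q + k *: v)); first exact: subspaceZ.
  have -> : v - k^-1 *: (q + k *: v) = (- k^-1) *: q.
    by rewrite scalerDr scalerA mulVf // scale1r opprD addrCA subrr addr0 scaleNr.
  exact: subspaceZ.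
Qed.

Lemma decomposition_unique W A : subspace W -> subspace A ->
  W `&` A `<=` [set 0] ->
  forall v w1 w2, W w1 -> A (v - w1) -> W w2 -> A (v - w2) -> w1 = w2.
Proof.
move=> sW sA WA v w1 w2 W1 A1 W2 A2; apply/eqP; rewrite -subr_eq0; apply/eqP.
apply: WA; split; first exact: subspaceB.
have -> : w1 - w2 = (v - w2) - (v - w1) by rewrite opprB [RHS]addrC addrA subrK.
exact: subspaceB.
Qed.

Lemma exists_projection W Z : subspace W -> subspace Z -> W `&` Z `<=` [set 0] ->
  exists p : {linear V -> V},
    [/\ forall v, W (p v), forall w, W w -> p w = w & forall z, Z z -> p z = 0].
Proof.
move=> sW sZ WZ.
have [A [sA ZA WA Amax]] := maximal_disjoint_subspace sZ WZ.
have decomp := maximal_disjoint_supplement sW sA WA Amax.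
have uniq := decomposition_unique sW sA WA.
pose p v := projT1 (cid2 (decomp v)).
have pW v : W (p v) by rewrite /p; case: cid2.
have pA v : A (v - p v) by rewrite /p; case: cid2.
have lp : linear p.
  move=> k x y; apply: (uniq (k *: x + y)) => //; first exact: sW.2.
  have -> : k *: x + y - (k *: p x + p y) = k *: (x - p x) + (y - p y).
    by rewrite scalerBr opprD addrACA.
  exact: sA.2.
exists (HB.pack_for {linear V -> V} p (GRing.isLinear.Build K V V *:%R p lp)).
split=> //= [w Ww|z Zz].
- by apply: (uniq w) => //; rewrite subrr; exact: sA.1.
- by apply: (uniq z) => //; [exact: sW.1 | rewrite subr0; exact: ZA].
Qed.

End Subspaces.

Section RegularEndomorphism.
Variables (K : fieldType) (V : lmodType K) (a : {linear V -> V}).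

Lemma exists_inner_inverse : exists h : {linear V -> V}, forall x, a (h (a x)) = a x.
Proof.
have [p0 [p0K p0id _]] :=
  exists_projection (subspace_kernel a) (subspace0 V) (@subIsetr _ _ _).
have [p3 [p3I p3id _]] :=
  exists_projection (subspace_range a) (subspace0 V) (@subIsetr _ _ _).
pose pre v := projT1 (cid2 (p3I v)).
have a_pre v : a (pre v) = p3 v by rewrite /pre; case: cid2.
(* [x - p0 x] is a representative of [x] modulo [ker a] depending only on [a x]. *)
have repr_eq x x' : a x = a x' -> x - p0 x = x' - p0 x'.
  move=> axx; apply/eqP; rewrite -subr_eq0; apply/eqP.
  have Kxx : a (x - x') = 0 by rewrite linearB axx subrr.
  have := p0id _ Kxx; rewrite linearB => p0xx.
  by rewrite opprD addrACA -opprD p0xx subrr.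
pose h v := pre v - p0 (pre v).
have lh : linear h.
  move=> k u v; rewrite /h (repr_eq _ (k *: pre u + pre v)).
    by rewrite linearP scalerBr opprD addrACA.
  by rewrite a_pre linearP linearP !a_pre.
exists (HB.pack_for {linear V -> V} h (GRing.isLinear.Build K V V *:%R h lh)).
move=> x /=; rewrite /h (repr_eq _ x); last by rewrite a_pre p3id //; exists x.
by rewrite linearB p0K subr0.
Qed.

Lemma exists_sandwich_idempotent : exists r : {linear V -> V},
  let e := a \o r \o a in
  (forall x, e (e x) = e x) /\ (forall x, a (a x - e (a x)) = 0).
Proof.
have [h aha] := exists_inner_inverse.
have sker := subspace_kernel a; have srange := subspace_range a.
have [pN [pNN pNid _]] :=
  exists_projection (subspaceI sker srange) (subspace0 V) (@subIsetr _ _ _).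
pose T := range a `&` [set y | pN y = 0].
have sT : subspace T by exact: subspaceI srange (subspace_kernel pN).
have Tker : T `&` [set x | a x = 0] `<=` [set 0].
  by move=> y [[Iy pNy] ay] /=; rewrite -(pNid y).
have [e [eT eid eK]] := exists_projection sT sker Tker.
have e_range y : range a y -> e y = y - pN y.
  move=> Iy; have Ty : T (y - pN y).
    split; first by apply: subspaceB => //; exact: (pNN y).2.
    by rewrite /= linearB [pN (pN y)]pNid ?subrr //; exact: pNN.
  transitivity (e ((y - pN y) + pN y)); first by rewrite subrK.
  by rewrite linearD eid // eK ?addr0 //; exact: (pNN y).1.
have e_ha x : e (h (a x)) = e x.
  by apply/eqP; rewrite -subr_eq0 -linearB eK //= linearB aha subrr.
have ahe x : a (h (e (h (a x)))) = e x.
  by rewrite e_ha; have [[y _ <-] _] := eT x; rewrite aha.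
exists (h \o e \o h)%FUN; split=> x /=; first by rewrite !ahe; exact: eid (eT x).
rewrite ahe e_range; last by exists x.
by rewrite opprB addrC subrK; exact: (pNN (a x)).1.
Qed.

End RegularEndomorphism.

Theorem corollary2p10 (I : Type) (K : I -> fieldType)
  (V : forall i, lmodType (K i)) (a : famEnd V) (ha : inR a) :
  exists e : famEnd V,
    (exists r : famEnd V, inR r /\ e = mulR a (mulR r a)) /\
    mulR e e = e /\
    mulR (mulR a (subR (oneR V) e)) (mulR a (subR (oneR V) e)) = zeroR V.
Proof.
pose aL i : {linear V i -> V i} :=
  HB.pack_for {linear V i -> V i} (a i) (GRing.isLinear.Build _ _ _ *:%R (a i) (ha i)).
pose r i := projT1 (cid (exists_sandwich_idempotent (aL i))).
have rP i := projT2 (cid (exists_sandwich_idempotent (aL i))).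
exists (mulR a (mulR (fun i => r i) a)); split.
  by exists (fun i => r i); split=> // i; exact: linearP.
split; apply: functional_extensionality_dep => i; apply: funext => x.
  exact: (rP i).1.
exact: (rP i).2.
Qed.
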